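(* Let $\mathbb{C}^{\mathbb{N}}$ be the Fréchet algebra of all complex sequences with pointwise multiplication and the product topology, and let $\mathcal{U}$ be a countably incomplete $\aleph(\mathbb{C}^{\mathbb{N}})^+$-good ultrafilter on an index set $I$. Then $(\mathbb{C}^{\mathbb{N}})_{\mathcal{U}}$ is isomorphic (as a Fréchet algebra) to $\mathbb{C}^{\mathbb{N}}$, has the approximation property, and is contractible.
   Context: For a Fréchet algebra $(\mathcal{A},(P_n))$ the ultrapower $(\mathcal{A})_{\mathcal{U}}=\ell_\infty(I,\mathcal{A})/\mathcal{N}_{\mathcal{U}}$ ($\ell_\infty$: families with $\sup_iP_n(x_i)<\infty$ for all $n$; $\mathcal{N}_{\mathcal{U}}$: those with $\lim_{\mathcal{U}}P_n(x_i)=0$ for all $n$), with seminorms $\lim_{\mathcal{U}}P_n(x_i)$ and coordinatewise product. A Fréchet algebra is contractible if it has a diagonal: $T\in\mathcal{A}\hat\otimes\mathcal{A}$ (completed projective tensor product) with $\Delta_{\mathcal{A}}(T)a=a$ and $a\cdot T=T\cdot a$ for all $a$, where $\Delta_{\mathcal{A}}(a\otimes b)=ab$, $a\cdot(b\otimes c)=ab\otimes c$, $(b\otimes c)\cdot a=b\otimes ca$. $\aleph(E)=\max(\aleph_U(E),\aleph_B(E))$ (least cardinalities of a zero-neighbourhood base and of a fundamental family of bounded sets); in this paper $\aleph^+=2^\aleph$. $\mathcal{U}$ is $\aleph$-good if for each cardinal $\beta\le\aleph$ and every monotonic $f:P_f(\beta)\to\mathcal{U}$ there is an additive $g:P_f(\beta)\to\mathcal{U}$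 with $g(u)\subseteq f(u)$ for all $u$ (monotonic: $u\subseteq w\Rightarrow f(u)\supseteq f(w)$; additive: $g(u\cup w)=g(u)\cap g(w)$). Approximation property: continuous finite rank operators are dense in the continuous operators for uniform convergence on precompact sets. *)

From mathcomp Require Import all_boot all_order all_algebra.
From mathcomp Require Import all_classical all_reals.
From mathcomp.real_closed Require Import complex.

Set Implicit Arguments.
Unset Strict Implicit.
Unset Printing Implicit Defensive.

Import Order.TTheory GRing.Theory Num.Theory.
Local Open Scope classical_set_scope.
Local Open Scope ring_scope.

(* Only the operations are recorded; the statement below asserts the  *)
(* properties needed.                                                  *)
Record falg_ops (R : realType) := FAlgOps {
  fcar : Type;
  fzero : fcar;
  fadd : fcar -> fcar -> fcar;
  fopp : fcar -> fcar;
  fmul : fcar -> fcar -> fcar;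
  fscale : R[i] -> fcar -> fcar;
  fsn : nat -> fcar -> R }.
Arguments fzero {R} f.
Arguments fadd {R f}.
Arguments fopp {R f}.
Arguments fmul {R f}.
Arguments fscale {R f}.
Arguments fsn {R} f.
Arguments fcar {R} f.

Section General.
Variable R : realType.
Implicit Types E F : falg_ops R.

Definition fsub E (x y : fcar E) := fadd x (fopp y).

Definition cont_linear E F (T : fcar E -> fcar F) : Prop :=
  (forall x y, T (fadd x y) = fadd (T x) (T y)) /\
  (forall (c : R[i]) x, T (fscale c x) = fscale c (T x)) /\
  (forall n, exists m (c : R), 0 <= c /\
      forall x, fsn F n (T x) <= c * fsn E m x).

Definition multiplicative_map E F (T : fcar E -> fcar F) : Prop :=
  forall x y, T (fmul x y) = fmul (T x) (T y).

Definition falg_iso E F : Prop :=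
  exists (phi : fcar E -> fcar F) (psi : fcar F -> fcar E),
    cancel phi psi /\ cancel psi phi /\
    cont_linear phi /\ cont_linear psi /\ multiplicative_map phi.

Definition lin_comb E (cs : seq R[i]) (xs : seq (fcar E)) : fcar E :=
  foldr (fun p acc => fadd (fscale p.1 p.2) acc) (fzero E) (zip cs xs).

Definition finite_rank E F (T : fcar E -> fcar F) : Prop :=
  exists xs : seq (fcar F), forall x, exists cs, T x = lin_comb cs xs.

Definition precompact E (K : set (fcar E)) : Prop :=
  forall n (e : R), 0 < e -> exists (s : nat -> fcar E) (N : nat),
    forall x, K x -> exists k, (k < N)%N /\ fsn E n (fsub x (s k)) < e.

Definition approx_prop E : Prop :=
  forall T : fcar E -> fcar E, cont_linear T ->
  forall K, precompact K ->
  forall n (e : R), 0 < e ->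
  exists F : fcar E -> fcar E, cont_linear F /\ finite_rank F /\
    forall x, K x -> fsn E n (fsub (T x) (F x)) < e.

(* elements of the algebraic tensor product E (x) E are represented by
   finite lists of elementary tensors *)
Definition tensor E := seq (fcar E * fcar E).

Definition bilinear_form E (phi : fcar E -> fcar E -> R[i]) : Prop :=
  (forall x y z, phi (fadd x y) z = phi x z + phi y z) /\
  (forall x y z, phi x (fadd y z) = phi x y + phi x z) /\
  (forall c x y, phi (fscale c x) y = c * phi x y) /\
  (forall c x y, phi x (fscale c y) = c * phi x y).

Definition tsum E (phi : fcar E -> fcar E -> R[i]) (t : tensor E) : R[i] :=
  \sum_(p <- t) phi p.1 p.2.

(* two representations denote the same element of E (x) E *)
Definition teq E (t s : tensor E) : Prop :=
  forall phi, bilinear_form phi -> tsum phi t = tsum phi s.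

Definition pinorm E (n : nat) (t : tensor E) : R :=
  inf [set r : R | exists s : tensor E, teq s t /\
         r = \sum_(p <- s) (fsn E n p.1 * fsn E n p.2)].

Definition tsub E (t s : tensor E) : tensor E :=
  t ++ map (fun p => (fopp p.1, p.2)) s.

Definition tdelta E (t : tensor E) : fcar E :=
  foldr (fun p acc => fadd (fmul p.1 p.2) acc) (fzero E) t.

Definition lact E (a : fcar E) (t : tensor E) : tensor E :=
  map (fun p => (fmul a p.1, p.2)) t.
Definition ract E (t : tensor E) (a : fcar E) : tensor E :=
  map (fun p => (p.1, fmul p.2 a)) t.

(* Elements of the completion E (^x) E are given by pi-Cauchy sequences
   of elements of E (x) E. *)
Definition tcauchy E (T : nat -> tensor E) : Prop :=
  forall n (e : R), 0 < e -> exists N, forall k l, (N <= k)%N -> (N <= l)%N ->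
    pinorm n (tsub (T k) (T l)) < e.

(* contractible: there is a diagonal T in E (^x) E with
   Delta(T) a = a  and  a.T = T.a  for all a *)
Definition contractible E : Prop :=
  exists T : nat -> tensor E, tcauchy T /\
  (forall a n (e : R), 0 < e -> exists N, forall k, (N <= k)%N ->
      fsn E n (fsub (fmul (tdelta (T k)) a) a) < e) /\
  (forall a n (e : R), 0 < e -> exists N, forall k, (N <= k)%N ->
      pinorm n (tsub (lact a (T k)) (ract (T k) a)) < e).

Definition zero_nbhd E (V : set (fcar E)) : Prop :=
  exists n (e : R), 0 < e /\ [set x | fsn E n x < e] `<=` V.

Definition nbhd_base E (A : Type) (V : A -> set (fcar E)) : Prop :=
  (forall a, zero_nbhd (V a)) /\
  (forall W, zero_nbhd W -> exists a, V a `<=` W).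

Definition bdd_set E (S : set (fcar E)) : Prop :=
  forall n, exists M : R, forall x, S x -> fsn E n x <= M.

Definition fund_bdd E (A : Type) (W : A -> set (fcar E)) : Prop :=
  (forall a, bdd_set (W a)) /\
  (forall S, bdd_set S -> exists a, S `<=` W a).

Definition ultrafilter (I : Type) (U : set (set I)) : Prop :=
  U setT /\ ~ U set0 /\
  (forall A B, U A -> A `<=` B -> U B) /\
  (forall A B, U A -> U B -> U (A `&` B)) /\
  (forall A, U A \/ U (~` A)).

Definition countably_incomplete (I : Type) (U : set (set I)) : Prop :=
  exists En : nat -> set I, (forall n, U (En n)) /\ \bigcap_n En n = set0.

Definition good_for (I : Type) (U : set (set I)) (B : Type) : Prop :=
  forall f : set B -> set I,
    (forall u, finite_set u -> U (f u)) ->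
    (forall u w, finite_set u -> finite_set w -> u `<=` w -> f w `<=` f u) ->
  exists g : set B -> set I,
    (forall u, finite_set u -> U (g u)) /\
    (forall u w, finite_set u -> finite_set w -> g (u `|` w) = g u `&` g w) /\
    (forall u, finite_set u -> g u `<=` f u).

(* U is aleph(E)^+-good, with aleph(E)^+ = 2^aleph(E) and
   aleph(E) = max(aleph_U(E), aleph_B(E)); A1, A2 index a zero-neighbourhood
   base and a fundamental family of bounded sets of least cardinality.
   |B| <= 2^max(|A1|,|A2|)  iff  |B| <= 2^|A1| or |B| <= 2^|A2|. *)
Definition aleph_plus_good (I : Type) (U : set (set I)) E : Prop :=
  exists (A1 A2 : Type) (V : A1 -> set (fcar E)) (W : A2 -> set (fcar E)),
    nbhd_base V /\
    (forall (A' : Type) (V' : A' -> set (fcar E)), nbhd_base V' ->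
        exists h : A1 -> A', injective h) /\
    fund_bdd W /\
    (forall (A' : Type) (W' : A' -> set (fcar E)), fund_bdd W' ->
        exists h : A2 -> A', injective h) /\
    (forall B : Type,
        ((exists h : B -> (A1 -> bool), injective h) \/
         (exists h : B -> (A2 -> bool), injective h)) -> good_for U B).

Section Ultrapower.
Variables (I : Type) (U : set (set I)) (E : falg_ops R).

Definition bounded_fam (x : I -> fcar E) : Prop :=
  forall n, exists M : R, forall i, fsn E n (x i) <= M.

Definition ulim (a : I -> R) (l : R) : Prop :=
  forall e : R, 0 < e -> U [set i | `|a i - l| < e].

Definition ulimit (a : I -> R) : R := xget 0 [set l | ulim a l].

Definition unegl (x : I -> fcar E) : Prop :=
  forall n, ulim (fun i => fsn E n (x i)) 0.

Definition urel (x y : I -> fcar E) : Prop :=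
  unegl (fun i => fsub (x i) (y i)).

Definition ucls_set (x : I -> fcar E) : set (I -> fcar E) :=
  [set y | bounded_fam y /\ urel x y].

(* the ultrapower l_inf(I,E)/N_U as the type of equivalence classes *)
Definition ucar : Type :=
  {X : set (I -> fcar E) | exists x, bounded_fam x /\ X = ucls_set x}.

Lemma bounded_const (c : fcar E) : bounded_fam (fun _ => c).
Proof. by move=> n; exists (fsn E n c) => i; exact: lexx. Qed.

Definition unormal (x : I -> fcar E) : I -> fcar E :=
  if pselect (bounded_fam x) then x else (fun _ => fzero E).

Lemma unormal_bounded x : bounded_fam (unormal x).
Proof. unfold unormal; destruct (pselect (bounded_fam x)) as [h|h]; [exact h | exact: bounded_const]. Qed.

(* class of a family (families that are not bounded are sent to 0;
   this case never arises for the operations below) *)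
Definition ucls (x : I -> fcar E) : ucar :=
  exist _ (ucls_set (unormal x))
    (ex_intro _ (unormal x) (conj (unormal_bounded x) erefl)).

Definition urep (X : ucar) : I -> fcar E := proj1_sig (cid (proj2_sig X)).

Definition ultrapower : falg_ops R := @FAlgOps R ucar
  (ucls (fun _ => fzero E))
  (fun X Y => ucls (fun i => fadd (urep X i) (urep Y i)))
  (fun X => ucls (fun i => fopp (urep X i)))
  (fun X Y => ucls (fun i => fmul (urep X i) (urep Y i)))
  (fun c X => ucls (fun i => fscale c (urep X i)))
  (fun n X => ulimit (fun i => fsn E n (urep X i))).

End Ultrapower.

Definition CN : falg_ops R := @FAlgOps R (nat -> R[i])
  (fun _ => 0)
  (fun x y k => x k + y k)
  (fun x k => - x k)
  (fun x y k => x k * y k)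
  (fun c x k => c * x k)
  (fun n x => \big[Num.max/0]_(k < n.+1) Normc.normc (x k)).

End General.

From mathcomp Require Import all_boot all_order all_algebra.
From mathcomp Require Import all_classical all_reals.
From mathcomp.real_closed Require Import complex.
From mathcomp Require Import ring lra.

(* Every bounded complex family has an ultralimit, so the class of a bounded
   family of sequences is determined by its sequence of coordinatewise
   ultralimits; this identifies (C^N)_U with C^N by an isometric algebra
   isomorphism, for any ultrafilter U.  Such an isomorphism transports the
   approximation property and contractibility, and C^N has both: truncations
   to the first m coordinates give finite rank approximations of continuous
   operators, and the partial sums of the e_j (x) e_j form a diagonal. *)

Set Implicit Arguments.
Unset Strict Implicit.
Unset Printing Implicit Defensive.
Import Order.TTheory GRing.Theory Num.Theory.
Local Open Scope classical_set_scope.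
Local Open Scope ring_scope.

Record isometric_iso (R : realType) (E F : falg_ops R)
    (phi : fcar E -> fcar F) (psi : fcar F -> fcar E) : Prop := IsometricIso {
  isoK : cancel phi psi;
  isoKV : cancel psi phi;
  iso0 : phi (fzero E) = fzero F;
  isoD : forall x y, phi (fadd x y) = fadd (phi x) (phi y);
  isoN : forall x, phi (fopp x) = fopp (phi x);
  isoM : forall x y, phi (fmul x y) = fmul (phi x) (phi y);
  isoZ : forall c x, phi (fscale c x) = fscale c (phi x);
  iso_fsn : forall n x, fsn F n (phi x) = fsn E n x }.

Definition tmap (R : realType) (E F : falg_ops R) (f : fcar E -> fcar F)
  (t : tensor E) : tensor F := map (fun p => (f p.1, f p.2)) t.

Section LinearCombinations.
Variables (R : realType) (E F : falg_ops R).

Lemma lin_comb_map (f : fcar E -> fcar F) :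
  f (fzero E) = fzero F ->
  (forall x y, f (fadd x y) = fadd (f x) (f y)) ->
  (forall c x, f (fscale c x) = fscale c (f x)) ->
  forall cs xs, f (lin_comb cs xs) = lin_comb cs (map f xs).
Proof.
move=> f0 fD fZ; rewrite /lin_comb.
by elim=> [|c cs IH] [|x xs] //=; rewrite fD fZ IH.
Qed.

End LinearCombinations.

Section LinearMaps.
Variables (R : realType) (E F G : falg_ops R).

Lemma cont_linear_comp (f : fcar E -> fcar F) (g : fcar F -> fcar G) :
  cont_linear f -> cont_linear g -> cont_linear (g \o f).
Proof.
move=> [fD [fZ fS]] [gD [gZ gS]]; split; first by move=> x y /=; rewrite fD gD.
split; first by move=> c x /=; rewrite fZ gZ.
move=> n; have [m [c [c0 hg]]] := gS n; have [k [d [d0 hf]]] := fS m.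
exists k, (c * d); split; first exact: mulr_ge0.
move=> x /=; apply: le_trans (hg _) _; rewrite -mulrA; exact: ler_wpM2l.
Qed.

Lemma finite_rank_comp (T : fcar E -> fcar F) (g : fcar F -> fcar G) :
  g (fzero F) = fzero G ->
  (forall x y, g (fadd x y) = fadd (g x) (g y)) ->
  (forall c x, g (fscale c x) = fscale c (g x)) ->
  finite_rank T -> finite_rank (g \o T).
Proof.
move=> g0 gD gZ [xs hxs]; exists (map g xs) => x /=.
by have [cs ->] := hxs x; exists cs; rewrite (lin_comb_map g0 gD gZ).
Qed.

Lemma bilinear_form_comp (f : fcar E -> fcar F) (form : fcar F -> fcar F -> R[i]) :
  (forall x y, f (fadd x y) = fadd (f x) (f y)) ->
  (forall c x, f (fscale c x) = fscale c (f x)) ->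
  bilinear_form form -> bilinear_form (fun x y => form (f x) (f y)).
Proof.
move=> fD fZ [b1 [b2 [b3 b4]]].
by split; [|split; [|split]] => *; rewrite ?fD ?fZ ?b1 ?b2 ?b3 ?b4.
Qed.

Lemma tsum_tmap (f : fcar E -> fcar F) (form : fcar F -> fcar F -> R[i]) t :
  tsum form (tmap f t) = tsum (fun x y => form (f x) (f y)) t.
Proof. by rewrite /tsum /tmap big_map. Qed.

End LinearMaps.

Section IsometricTransfer.
Variables (R : realType) (E F : falg_ops R).
Variables (phi : fcar E -> fcar F) (psi : fcar F -> fcar E).
Hypothesis iso : isometric_iso phi psi.

Let phiK := isoK iso.
Let phiKV := isoKV iso.
Let phi0 := iso0 iso.
Let phiD := isoD iso.
Let phiN := isoN iso.
Let phiM := isoM iso.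
Let phiZ := isoZ iso.
Let phi_fsn := iso_fsn iso.

Let psi0 : psi (fzero F) = fzero E. Proof. by rewrite -phi0 phiK. Qed.
Let psiD x y : psi (fadd x y) = fadd (psi x) (psi y).
Proof. by apply: (can_inj phiK); rewrite phiD !phiKV. Qed.
Let psiZ c x : psi (fscale c x) = fscale c (psi x).
Proof. by apply: (can_inj phiK); rewrite phiZ !phiKV. Qed.
Let psi_fsn n x : fsn E n (psi x) = fsn F n x.
Proof. by rewrite -phi_fsn phiKV. Qed.

Lemma cont_linear_iso : cont_linear phi.
Proof.
split=> //; split=> // n; exists n, 1; split=> // x; by rewrite phi_fsn mul1r.
Qed.

Lemma cont_linear_isoV : cont_linear psi.
Proof.
split=> //; split=> // n; exists n, 1; split=> // x; by rewrite psi_fsn mul1r.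
Qed.

Lemma falg_iso_of_isometric : falg_iso E F.
Proof.
exists phi, psi.
by split; [|split; [|split; [exact: cont_linear_iso|split; [exact: cont_linear_isoV|]]]].
Qed.

Lemma precompact_iso (K : set (fcar E)) : precompact K -> precompact (K \o psi).
Proof.
move=> Kpc k d d0; have [s [N h]] := Kpc k d d0; exists (phi \o s), N => y Ky.
have [j [jN hj]] := h _ Ky; exists j; split=> //.
by rewrite /fsub /= -(phiKV y) -phiN -phiD phi_fsn.
Qed.

Lemma approx_prop_isometric : approx_prop F -> approx_prop E.
Proof.
move=> AP T cT K Kpc n e e0.
have cT' : cont_linear (phi \o T \o psi).
  exact: cont_linear_comp cont_linear_isoV (cont_linear_comp cT cont_linear_iso).
have [G [cG [rG hG]]] := AP _ cT' _ (precompact_iso Kpc) n e e0.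
exists (psi \o G \o phi); split.
  exact: cont_linear_comp cont_linear_iso (cont_linear_comp cG cont_linear_isoV).
split.
  have [xs hxs] := finite_rank_comp psi0 psiD psiZ rG.
  by exists xs => x; apply: hxs.
move=> x Kx; rewrite -phi_fsn /fsub phiD phiN phiKV.
by have := hG (phi x); rewrite /= phiK; apply.
Qed.

Lemma tmapKV t : tmap phi (tmap psi t) = t.
Proof. by elim: t => [|[a b] t IH] //=; rewrite !phiKV IH. Qed.

Lemma teq_tmap s t : teq (tmap phi s) (tmap phi t) <-> teq s t.
Proof.
split=> h form bform.
  have eform : (fun x y => form (psi (phi x)) (psi (phi y))) = form.
    by apply: funext => x; apply: funext => y; rewrite !phiK.
  by have := h _ (bilinear_form_comp psiD psiZ bform); rewrite !tsum_tmap eform.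
by rewrite !tsum_tmap; apply: h; exact: bilinear_form_comp.
Qed.

Lemma pinorm_tmap n t : pinorm n (tmap phi t) = pinorm n t.
Proof.
rewrite /pinorm; congr inf; apply: funext => r; apply: propext; split.
  move=> [s [hs ->]]; exists (tmap psi s); split.
    by apply/teq_tmap; rewrite tmapKV.
  by rewrite /tmap big_map; apply: eq_bigr => p _ /=; rewrite !psi_fsn.
move=> [s [hs ->]]; exists (tmap phi s); split; first exact/teq_tmap.
by rewrite /tmap big_map; apply: eq_bigr => p _ /=; rewrite !phi_fsn.
Qed.

Lemma tmap_tsub t s : tmap phi (tsub t s) = tsub (tmap phi t) (tmap phi s).
Proof.
rewrite /tsub /tmap map_cat -!map_comp; congr cat.
by apply: eq_map => p /=; rewrite phiN.
Qed.

Lemma tmap_lact a t : tmap phi (lact a t) = lact (phi a) (tmap phi t).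
Proof. by rewrite /lact /tmap -!map_comp; apply: eq_map => p /=; rewrite phiM. Qed.

Lemma tmap_ract a t : tmap phi (ract t a) = ract (tmap phi t) (phi a).
Proof. by rewrite /ract /tmap -!map_comp; apply: eq_map => p /=; rewrite phiM. Qed.

Lemma tdelta_tmap t : tdelta (tmap phi t) = phi (tdelta t).
Proof. by elim: t => [|p t IH] //=; rewrite phiD phiM IH. Qed.

Lemma contractible_isometric : contractible F -> contractible E.
Proof.
move=> [T [Tc [Tdelta Tcomm]]]; exists (fun k => tmap psi (T k)); split.
  move=> n e e0; have [N h] := Tc n e e0; exists N => k l kN lN.
  by rewrite -pinorm_tmap tmap_tsub !tmapKV; apply: h.
split.
  move=> a n e e0; have [N h] := Tdelta (phi a) n e e0; exists N => k kN.
  by rewrite -phi_fsn /fsub phiD phiN phiM -tdelta_tmap tmapKV; apply: h.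
move=> a n e e0; have [N h] := Tcomm (phi a) n e e0; exists N => k kN.
by rewrite -pinorm_tmap tmap_tsub tmap_lact tmap_ract tmapKV; apply: h.
Qed.

End IsometricTransfer.

Section SequenceAlgebra.
Variable R : realType.
Local Notation C := R[i].
Local Notation normc := (@Normc.normc R).
Local Notation CN := (CN R).

Lemma normc_ge0 (z : C) : 0 <= normc z.
Proof. by case: z => a b; rewrite /Normc.normc sqrtr_ge0. Qed.

Definition cnorm n (x : nat -> C) : R := \big[Num.max/0]_(k < n.+1) normc (x k).

Lemma fsn_CN n x : fsn CN n x = cnorm n x. Proof. by []. Qed.

Lemma cnorm_ge_coord n x k : (k <= n)%N -> normc (x k) <= cnorm n x.
Proof.
move=> kn; have kn' : (k < n.+1)%N by [].
exact: (le_bigmax _ (fun i : 'I_n.+1 => normc (x i)) (Ordinal kn')).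
Qed.

Lemma cnorm_ge0 n x : 0 <= cnorm n x.
Proof. exact: le_trans (normc_ge0 (x 0%N)) (cnorm_ge_coord x (leq0n n)). Qed.

Lemma cnorm_le n x (e : R) :
  0 <= e -> (forall k, (k <= n)%N -> normc (x k) <= e) -> cnorm n x <= e.
Proof. by move=> e0 h; apply: bigmax_le => // i _; apply: h; rewrite -ltnS. Qed.

Lemma cnorm_lt n x (e : R) :
  0 < e -> (forall k, (k <= n)%N -> normc (x k) < e) -> cnorm n x < e.
Proof. by move=> e0 h; apply: bigmax_lt => // i _; apply: h; rewrite -ltnS. Qed.

Lemma cnorm_eq0 n x : (forall k, (k <= n)%N -> x k = 0) -> cnorm n x = 0.
Proof.
move=> h; apply/eqP; rewrite eq_le cnorm_ge0 andbT; apply: cnorm_le => // k kn.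
by rewrite h // Normc.normc0.
Qed.

Lemma cnormD n (a b : nat -> C) : cnorm n (fun k => a k + b k) <= cnorm n a + cnorm n b.
Proof.
apply: cnorm_le; first by rewrite addr_ge0 ?cnorm_ge0.
move=> k kn; apply: le_trans (le_normcD _ _) _; apply: lerD; exact: cnorm_ge_coord.
Qed.

Lemma cnormN n (a : nat -> C) : cnorm n (fun k => - a k) <= cnorm n a.
Proof.
apply: cnorm_le; first exact: cnorm_ge0.
by move=> k kn; rewrite normcN; apply: cnorm_ge_coord.
Qed.

Lemma cnormM n (a b : nat -> C) : cnorm n (fun k => a k * b k) <= cnorm n a * cnorm n b.
Proof.
apply: cnorm_le; first by rewrite mulr_ge0 ?cnorm_ge0.
move=> k kn; rewrite Normc.normcM.
by apply: ler_pM; rewrite ?normc_ge0 ?cnorm_ge_coord.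
Qed.

Lemma cnormZ n (c : C) (a : nat -> C) : cnorm n (fun k => c * a k) <= normc c * cnorm n a.
Proof.
apply: cnorm_le; first by rewrite mulr_ge0 ?cnorm_ge0 ?normc_ge0.
move=> k kn; rewrite Normc.normcM.
by apply: ler_wpM2l; rewrite ?normc_ge0 ?cnorm_ge_coord.
Qed.

Lemma cnorm_lipschitz n (a b : nat -> C) :
  `|cnorm n a - cnorm n b| <= cnorm n (fun k => a k - b k).
Proof.
have tri (u v : nat -> C) : cnorm n u <= cnorm n (fun k => u k - v k) + cnorm n v.
  apply: le_trans (cnormD _ _ _); apply: cnorm_le; first exact: cnorm_ge0.
  by move=> k kn; have := cnorm_ge_coord (fun k => u k - v k + v k) kn; rewrite subrK.
have ba : cnorm n (fun k => b k - a k) = cnorm n (fun k => a k - b k).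
  by rewrite /cnorm; apply: eq_bigr => k _; rewrite -normcN opprB.
have := tri a b; have := tri b a; rewrite ba => h1 h2.
rewrite ler_norml; apply/andP; split; lra.
Qed.

Lemma cont_linear0 (T : fcar CN -> fcar CN) : cont_linear T -> T (fzero CN) = fzero CN.
Proof.
move=> [_ [TZ _]]; have -> : fzero CN = fscale (0 : C) (fzero CN).
  by apply: funext => k /=; rewrite mul0r.
by rewrite TZ; apply: funext => k /=; rewrite !mul0r.
Qed.

Lemma cont_linearB (T : fcar CN -> fcar CN) x y :
  cont_linear T -> T (fsub x y) = fsub (T x) (T y).
Proof.
move=> [TD [TZ _]]; have oppE (z : fcar CN) : fopp z = fscale (-1) z.
  by apply: funext => k /=; rewrite mulN1r.
by rewrite /fsub !oppE TD TZ.
Qed.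

Definition unit_seq (j : nat) : nat -> C := fun i => (i == j)%:R.

Lemma cnorm_unit_seq n j : (n < j)%N -> cnorm n (unit_seq j) = 0.
Proof.
move=> nj; apply: cnorm_eq0 => k kn; rewrite /unit_seq (_ : (k == j) = false) //.
by apply/negbTE; rewrite neq_ltn (leq_ltn_trans kn nj).
Qed.

Lemma lin_comb_unit_iota (x : nat -> C) a N k :
  (@lin_comb R CN (map x (iota a N)) (map unit_seq (iota a N)) : nat -> C) k =
  if ((a <= k) && (k < a + N))%N then x k else 0.
Proof.
elim: N a => [|N IH] a /=.
  by rewrite addn0; case: (leqP a k) => h //; rewrite ltnNge h.
rewrite -[LHS]/(x a * unit_seq a k +
  (@lin_comb R CN (map x (iota a.+1 N)) (map unit_seq (iota a.+1 N)) : nat -> C) k).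
rewrite IH /unit_seq; case: (ltngtP k a) => h.
- by rewrite /= mulr0 addr0.
- by rewrite mulr0 add0r addSnnS.
- by rewrite h mulr1 addr0 /= addnS ltnS leq_addr.
Qed.

Definition trunc (m : nat) (y : nat -> C) : nat -> C :=
  fun k => if (k <= m)%N then y k else 0.

Lemma cnorm_trunc n m y : cnorm n (trunc m y) <= cnorm n y.
Proof.
apply: cnorm_le; first exact: cnorm_ge0.
move=> k kn; rewrite /trunc; case: (k <= m)%N; first exact: cnorm_ge_coord.
by rewrite Normc.normc0 cnorm_ge0.
Qed.

Lemma cnorm_sub_trunc m y : cnorm m (fsub (E := CN) y (trunc m y)) = 0.
Proof. by apply: cnorm_eq0 => k km /=; rewrite /trunc km subrr. Qed.

Lemma cont_linear_trunc m : cont_linear (trunc m : fcar CN -> fcar CN).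
Proof.
split; first by move=> y z; apply: funext => k /=; rewrite /trunc; case: ifP; rewrite ?addr0.
split; first by move=> c y; apply: funext => k /=; rewrite /trunc; case: ifP; rewrite ?mulr0.
move=> n; exists n, 1; split=> // y; rewrite mul1r; exact: cnorm_trunc.
Qed.

Lemma finite_rank_trunc m : finite_rank (trunc m : fcar CN -> fcar CN).
Proof.
exists (map unit_seq (iota 0 m.+1)) => y; exists (map y (iota 0 m.+1)).
by apply: funext => k; rewrite lin_comb_unit_iota /trunc add0n ltnS.
Qed.

Lemma CN_approx_prop : approx_prop CN.
Proof.
move=> T cT K _ n e e0; have [TD [TZ TS]] := cT.
have [m [c [c0 hc]]] := TS n.
exists (T \o trunc m); split; first exact: cont_linear_comp (cont_linear_trunc m) cT.
split; first exact: finite_rank_comp (cont_linear0 cT) TD TZ (finite_rank_trunc m).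
move=> y _; rewrite [(T \o _) y]/= -cont_linearB //.
by apply: le_lt_trans (hc _) _; rewrite fsn_CN cnorm_sub_trunc mulr0.
Qed.

Lemma pinorm_le_rep n (s t : tensor CN) :
  teq s t -> pinorm n t <= \sum_(p <- s) cnorm n p.1 * cnorm n p.2.
Proof.
move=> st; rewrite /pinorm; apply: ge_inf; last by exists s.
exists 0 => r [s' [_ ->]]; apply: sumr_ge0 => p _; apply: mulr_ge0; exact: cnorm_ge0.
Qed.

Lemma mul_unit_seq_l (a : nat -> C) j :
  fmul (f := CN) a (unit_seq j) = fscale (f := CN) (a j) (unit_seq j).
Proof.
by apply: funext => i /=; rewrite /unit_seq; case: eqP => [->|]; rewrite ?mulr1 ?mulr0.
Qed.

Lemma mul_unit_seq_r (a : nat -> C) j :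
  fmul (f := CN) (unit_seq j) a = fscale (f := CN) (a j) (unit_seq j).
Proof. by rewrite -mul_unit_seq_l; apply: funext => i /=; rewrite mulrC. Qed.

Lemma opp_unit_seq j : fopp (f := CN) (unit_seq j) = fscale (f := CN) (-1) (unit_seq j).
Proof. by apply: funext => i /=; rewrite mulN1r. Qed.

Definition unit_diagonal (k : nat) : tensor CN :=
  map (fun j => (unit_seq j, unit_seq j)) (iota 0 k).

Lemma tdelta_unit_diagonal k :
  tdelta (unit_diagonal k) = @lin_comb R CN (map (fun=> 1) (iota 0 k)) (map unit_seq (iota 0 k)).
Proof.
rewrite /unit_diagonal; elim: (iota 0 k) => [|j js IH] //=; rewrite IH.
apply: funext => i; rewrite /lin_comb /= /unit_seq mul1r.
by case: (i == j); rewrite ?mulr1 ?mulr0.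
Qed.

Lemma teq_unit_diagonal_sub n k l : (n < k)%N -> (n < l)%N ->
  @teq R CN (map (fun j => (unit_seq j, unit_seq j)) (iota n.+1 (k - n.+1)) ++
       map (fun j => (fopp (f := CN) (unit_seq j), unit_seq j)) (iota n.+1 (l - n.+1)))
      (tsub (unit_diagonal k) (unit_diagonal l)).
Proof.
move=> nk nl form [_ [_ [formZ _]]].
have split_iota m : (n < m)%N -> iota 0 m = iota 0 n.+1 ++ iota n.+1 (m - n.+1).
  by move=> nm; rewrite -[in LHS](subnKC nm) iotaD.
rewrite /tsum /tsub /unit_diagonal (split_iota k nk) (split_iota l nl).
move: (iota 0 n.+1) (iota n.+1 (k - n.+1)) (iota n.+1 (l - n.+1)) => A B D.
have formN js : \sum_(j <- js) form (fun i => - unit_seq j i) (unit_seq j) =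
                - \sum_(j <- js) form (unit_seq j) (unit_seq j).
  rewrite -sumrN; apply: eq_bigr => j _.
  by rewrite (opp_unit_seq j : (fun i => - unit_seq j i) = _) formZ mulN1r.
rewrite -map_comp !map_cat !big_cat !big_map /= !formN.
by rewrite addrACA subrr add0r.
Qed.

Lemma unit_diagonal_cauchy : tcauchy unit_diagonal.
Proof.
move=> n e e0; exists n.+1 => k l kn ln.
apply: le_lt_trans e0; apply: le_trans (pinorm_le_rep _ (teq_unit_diagonal_sub kn ln)) _.
rewrite big_cat !big_map /= !big_seq !big1 ?addr0 // => j;
  by rewrite mem_iota => /andP[nj _]; rewrite cnorm_unit_seq ?mulr0.
Qed.

Lemma teq_unit_diagonal_comm (a : fcar CN) k :
  teq [::] (tsub (lact a (unit_diagonal k)) (ract (unit_diagonal k) a)).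
Proof.
move=> form [_ [_ [formZl formZr]]].
rewrite /tsum /tsub /lact /ract /unit_diagonal big_nil big_cat !big_map /= -big_split /=.
rewrite big1 // => j _.
rewrite (mul_unit_seq_l a j : (fun i => a i * unit_seq j i) = _).
rewrite (mul_unit_seq_r a j : (fun i => unit_seq j i * a i) = _).
rewrite (opp_unit_seq j : (fun i => - unit_seq j i) = _).
by rewrite formZl formZr formZl mulN1r mulrN subrr.
Qed.

Lemma CN_contractible : contractible CN.
Proof.
exists unit_diagonal; split; first exact: unit_diagonal_cauchy.
split.
  move=> a n e e0; exists n.+1 => k nk; rewrite fsn_CN cnorm_eq0 // => i ni /=.
  by rewrite tdelta_unit_diagonal lin_comb_unit_iota add0n (leq_ltn_trans ni nk) mul1r subrr.
move=> a n e e0; exists 0%N => k _; apply: le_lt_trans e0.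
by apply: le_trans (pinorm_le_rep _ (teq_unit_diagonal_comm a k)) _; rewrite big_nil.
Qed.

End SequenceAlgebra.

Section Ultrafilter.
Variables (R : realType) (I : Type) (U : set (set I)).
Hypothesis HU : ultrafilter U.
Local Notation C := R[i].
Local Notation normc := (@Normc.normc R).

Lemma ultraS A B : U A -> A `<=` B -> U B.
Proof. by case: HU => _ [_ [h _]]; apply: h. Qed.

Lemma ultraI A B : U A -> U B -> U (A `&` B).
Proof. by case: HU => _ [_ [_ [h _]]]; apply: h. Qed.

Lemma ultraT : U setT. Proof. by case: HU. Qed.

Lemma ultra_or_compl A : U A \/ U (~` A).
Proof. by case: HU => _ [_ [_ [_ h]]]; apply: h. Qed.

Lemma ultra_inhabited A : U A -> exists i, A i.
Proof.
move=> UA; apply: contrapT => hne; case: HU => _ [U0 _]; apply: U0.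
suff -> : set0 = A by [].
by apply/seteqP; split => // i Ai; apply: hne; exists i.
Qed.

Lemma ultra_meet (A B D : set I) :
  U A -> U B -> (forall i, A i -> B i -> D i) -> U D.
Proof. by move=> UA UB h; apply: ultraS (ultraI UA UB) _ => i [ha hb]; apply: h. Qed.

Lemma ultra_bigI (A : nat -> set I) n : (forall k, (k <= n)%N -> U (A k)) ->
  U [set i | forall k, (k <= n)%N -> A k i].
Proof.
elim: n => [|n IH] h.
  by apply: (ultraS (h 0%N (leqnn 0))) => i Ai k; rewrite leqn0 => /eqP ->.
apply: (ultra_meet (IH (fun k kn => h k (leqW kn))) (h n.+1 (leqnn _))) => i h1 h2 k.
by rewrite leq_eqVlt => /orP[/eqP -> //|]; rewrite ltnS; apply: h1.
Qed.

Lemma ulim_unique (a : I -> R) l l' : ulim U a l -> ulim U a l' -> l = l'.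
Proof.
move=> h h'; apply/eqP; rewrite -subr_eq0 -normr_eq0; apply: contrapT => /negP hn.
have e0 : 0 < `|l - l'| / 2 by rewrite divr_gt0 // lt_neqAle eq_sym hn normr_ge0.
have [i [hi hi']] := ultra_inhabited (ultraI (h _ e0) (h' _ e0)).
have : `|l - l'| < `|l - l'| / 2 + `|l - l'| / 2.
  rewrite {1}(_ : l - l' = (a i - l') - (a i - l)); last by ring.
  apply: le_lt_trans (ler_normB _ _) _; exact: ltrD hi' hi.
by rewrite -splitr ltxx.
Qed.

Lemma ulimitE (a : I -> R) l : ulim U a l -> ulimit U a = l.
Proof. move=> h; apply: (ulim_unique _ h); apply: xgetPex; by exists l. Qed.

(* The ultralimit of a bounded family is the supremum of the t with
   [t <= a i] for U-almost all i. *)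
Lemma ulim_exists (a : I -> R) M : (forall i, `|a i| <= M) -> exists l, ulim U a l.
Proof.
move=> hM; pose S := [set t : R | U [set i | t <= a i]].
have SM : S (- M).
  by apply: (ultraS ultraT) => i _; have := hM i; rewrite ler_norml => /andP[].
have Sub : ubound S (M + 1).
  move=> t St; apply: contrapT => /negP; rewrite -ltNge => ht.
  have [i hi] := ultra_inhabited St; have := hM i; rewrite ler_norml => /andP[_ h2].
  have : M + 1 <= M by apply: le_trans (ltW ht) (le_trans hi h2).
  move=> ?; lra.
have hS : has_sup S by split; [exists (- M) | exists (M + 1)].
exists (sup S) => e e0.
have [t St ht] := sup_adherent e0 hS.
have nS : ~ S (sup S + e) by move=> /(sup_upper_bound hS) /= ?; lra.
have Ult : U [set i | a i < sup S + e].
  case: (ultra_or_compl [set i | sup S + e <= a i]) => // h.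
  by apply: (ultraS h) => i /= /negP; rewrite -ltNge.
apply: (ultra_meet St Ult) => i /= h1 h2; rewrite ltr_norml; apply/andP; split; lra.
Qed.

Lemma Re_le_normc (w : C) : `|complex.Re w| <= normc w.
Proof.
case: w => a b /=; rewrite -sqrtr_sqr; apply: ler_wsqrtr; rewrite lerDl; exact: sqr_ge0.
Qed.

Lemma Im_le_normc (w : C) : `|complex.Im w| <= normc w.
Proof.
case: w => a b /=; rewrite -sqrtr_sqr; apply: ler_wsqrtr; rewrite lerDr; exact: sqr_ge0.
Qed.

Lemma normc_le_ReIm (w : C) : normc w <= `|complex.Re w| + `|complex.Im w|.
Proof.
case: w => a b; rewrite {1}(_ : (a +i* b)%C = (a +i* 0)%C + (0 +i* b)%C); last first.
  by rewrite /GRing.add /= addr0 add0r.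
apply: le_trans (le_normcD _ _) _.
by rewrite /Normc.normc /= expr0n /= addr0 add0r !sqrtr_sqr.
Qed.

Definition uclose (z w : I -> C) :=
  forall e : R, 0 < e -> U [set i | normc (z i - w i) < e].

Lemma uclose_refl z : uclose z z.
Proof. by move=> e e0; apply: (ultraS ultraT) => i _ /=; rewrite subrr Normc.normc0. Qed.

Lemma uclose_sym z w : uclose z w -> uclose w z.
Proof. by move=> h e e0; apply: (ultraS (h e e0)) => i /=; rewrite -normcN opprB. Qed.

Lemma uclose_trans z w v : uclose z w -> uclose w v -> uclose z v.
Proof.
move=> h1 h2 e e0; have e2 : 0 < e / 2 by rewrite divr_gt0.
apply: (ultra_meet (h1 _ e2) (h2 _ e2)) => i /= a b.
rewrite -[z i - v i](subrKA (w i)); apply: le_lt_trans (le_normcD _ _) _.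
by rewrite (splitr e); exact: ltrD.
Qed.

Lemma ucloseD z z' w w' : uclose z z' -> uclose w w' ->
  uclose (fun i => z i + w i) (fun i => z' i + w' i).
Proof.
move=> h1 h2 e e0; have e2 : 0 < e / 2 by rewrite divr_gt0.
apply: (ultra_meet (h1 _ e2) (h2 _ e2)) => i /= a b.
rewrite (_ : z i + w i - (z' i + w' i) = (z i - z' i) + (w i - w' i)); last by ring.
apply: le_lt_trans (le_normcD _ _) _; rewrite (splitr e); exact: ltrD.
Qed.

Lemma ucloseN z z' : uclose z z' -> uclose (fun i => - z i) (fun i => - z' i).
Proof. by move=> h e e0; apply: (ultraS (h e e0)) => i /=; rewrite -opprD normcN. Qed.

Lemma ucloseZ (c : C) z z' : uclose z z' -> uclose (fun i => c * z i) (fun i => c * z' i).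
Proof.
move=> h e e0; have K0 : 0 < normc c + 1 by rewrite ltr_pwDr // normc_ge0.
apply: (ultraS (h _ (divr_gt0 e0 K0))) => i /= hi.
rewrite -mulrBr Normc.normcM.
apply: le_lt_trans (_ : _ <= (normc c + 1) * normc (z i - z' i)) _.
  by rewrite ler_wpM2r ?normc_ge0 // lerDl.
by rewrite mulrC -ltr_pdivlMr.
Qed.

Lemma ucloseM (z w : I -> C) l m M : uclose z (fun=> l) -> uclose w (fun=> m) ->
  (forall i, normc (z i) <= M) -> uclose (fun i => z i * w i) (fun=> l * m).
Proof.
move=> h1 h2 hM e e0.
have K0 : 0 < `|M| + normc m + 1 by rewrite ltr_pwDr // addr_ge0 ?normc_ge0.
pose d := e / (`|M| + normc m + 1).
have d0 : 0 < d by rewrite divr_gt0.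
have ed : e = `|M| * d + normc m * d + d by rewrite /d; field; rewrite gt_eqF.
apply: (ultra_meet (h1 _ d0) (h2 _ d0)) => i /= a b.
rewrite (_ : z i * w i - l * m = z i * (w i - m) + (z i - l) * m); last by ring.
apply: le_lt_trans (le_normcD _ _) _; rewrite !Normc.normcM.
have p1 : normc (z i) * normc (w i - m) <= `|M| * d.
  apply: ler_pM; rewrite ?normc_ge0 //; last exact: ltW.
  exact: le_trans (hM i) (ler_norm _).
have p2 : normc (z i - l) * normc m <= normc m * d.
  by rewrite mulrC; apply: ler_wpM2l; [exact: normc_ge0 | exact: ltW].
rewrite ed; lra.
Qed.

Lemma uclose_const_exists (z : I -> C) M :
  (forall i, normc (z i) <= M) -> exists l, uclose z (fun=> l).
Proof.
move=> hM.
have [la hla] := ulim_exists (fun i => le_trans (Re_le_normc (z i)) (hM i)).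
have [lb hlb] := ulim_exists (fun i => le_trans (Im_le_normc (z i)) (hM i)).
exists (la +i* lb)%C => e e0; have e2 : 0 < e / 2 by rewrite divr_gt0.
apply: (ultra_meet (hla _ e2) (hlb _ e2)) => i /= a b.
apply: le_lt_trans (normc_le_ReIm _) _.
have -> : complex.Re (z i - (la +i* lb)%C) = complex.Re (z i) - la by case: (z i).
have -> : complex.Im (z i - (la +i* lb)%C) = complex.Im (z i) - lb by case: (z i).
rewrite (splitr e); exact: ltrD.
Qed.

Lemma uclose_const_unique z l l' : uclose z (fun=> l) -> uclose z (fun=> l') -> l = l'.
Proof.
move=> h1 h2; have h := uclose_trans (uclose_sym h1) h2.
apply/eqP; rewrite -subr_eq0; apply/eqP; apply: Normc.eq0_normc.
apply/eqP; rewrite eq_le normc_ge0 andbT; apply: contrapT => /negP; rewrite -ltNge => hp.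
by have [i /= hi] := ultra_inhabited (h _ hp); rewrite ltxx in hi.
Qed.

End Ultrafilter.

Section UltrapowerOfSequences.
Variables (R : realType) (I : Type) (U : set (set I)).
Hypothesis HU : ultrafilter U.
Local Notation C := R[i].
Local Notation normc := (@Normc.normc R).
Local Notation CN := (CN R).
Local Notation E := (ultrapower U CN).
Local Notation bounded := (@bounded_fam R I CN).
Local Notation uclose := (uclose U).
Local Notation urel := (@urel R I U CN).
Local Notation ucls := (@ucls R I U CN).
Local Notation ucls_set := (@ucls_set R I U CN).

Lemma urepP (X : fcar E) : bounded (urep X) /\ proj1_sig X = ucls_set (urep X).
Proof. exact: (proj2_sig (cid (proj2_sig X))). Qed.

Lemma bounded_urep (X : fcar E) : bounded (urep X).
Proof. exact: (urepP X).1. Qed.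

Lemma unormal_id (x : I -> nat -> C) : bounded x -> unormal (E := CN) x = x.
Proof. by move=> h; rewrite /unormal; case: pselect. Qed.

Lemma urel_coordwise (x y : I -> nat -> C) :
  urel x y <-> forall k, uclose (fun i => x i k) (fun i => y i k).
Proof.
split=> h.
  move=> k e e0; apply: (ultraS HU (h k e e0)) => i /=.
  rewrite subr0 ger0_norm; last exact: (@cnorm_ge0 R k (fun k0 => x i k0 - y i k0)).
  apply: le_lt_trans; exact: (@cnorm_ge_coord R k (fun k0 => x i k0 - y i k0) k (leqnn k)).
move=> n e e0.
have := ultra_bigI HU (A := fun k => [set i | normc (x i k - y i k) < e]) (n := n)
  (fun k _ => h k e e0).
move=> hU; apply: (ultraS HU hU) => i /= hi.
rewrite subr0 ger0_norm; last exact: (@cnorm_ge0 R n (fun k0 => x i k0 - y i k0)).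
exact: (@cnorm_lt R n (fun k0 => x i k0 - y i k0)).
Qed.

Lemma urel_refl x : urel x x.
Proof. by apply/urel_coordwise => k; exact: (uclose_refl HU). Qed.

Lemma urel_urep_ucls x : bounded x -> urel x (urep (ucls x)).
Proof.
move=> bx; have [br hX] := urepP (ucls x).
have : ucls_set (urep (ucls x)) (urep (ucls x)) by split => //; exact: urel_refl.
by rewrite -hX /= unormal_id // => -[].
Qed.

Lemma bounded_coord (x : I -> nat -> C) k : bounded x -> exists M, forall i, normc (x i k) <= M.
Proof.
by move=> /(_ k) [M hM]; exists M => i; apply: le_trans (hM i); exact: cnorm_ge_coord.
Qed.

Lemma boundedD x y : bounded x -> bounded y -> bounded (fun i k => x i k + y i k).
Proof.
move=> bx hy n; have [M1 h1] := bx n; have [M2 h2] := hy n; exists (M1 + M2) => i.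
apply: le_trans (cnormD _ _ _) _; exact: lerD (h1 i) (h2 i).
Qed.

Lemma boundedN x : bounded x -> bounded (fun i k => - x i k).
Proof. by move=> bx n; have [M h] := bx n; exists M => i; apply: le_trans (cnormN _ _) (h i). Qed.

Lemma boundedM x y : bounded x -> bounded y -> bounded (fun i k => x i k * y i k).
Proof.
move=> bx hy n; have [M1 h1] := bx n; have [M2 h2] := hy n; exists (M1 * M2) => i.
apply: le_trans (cnormM _ _ _) _; apply: ler_pM; rewrite ?cnorm_ge0 //; [exact: h1 | exact: h2].
Qed.

Lemma boundedZ (c : C) x : bounded x -> bounded (fun i k => c * x i k).
Proof.
move=> bx n; have [M h] := bx n; exists (normc c * M) => i.
apply: le_trans (cnormZ _ _ _) _; apply: ler_wpM2l; rewrite ?normc_ge0 //; exact: h.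
Qed.

Definition uclim (z : I -> C) : C := xget 0 [set l | uclose z (fun=> l)].

Lemma uclimP z M : (forall i, normc (z i) <= M) -> uclose z (fun=> uclim z).
Proof.
move=> hM; apply: (xgetPex 0 (P := [set l | uclose z (fun=> l)])).
exact: uclose_const_exists hM.
Qed.

Definition ucoord (X : fcar E) : nat -> C := fun k => uclim (fun i => urep X i k).
Definition uconst (y : nat -> C) : fcar E := ucls (fun=> y).

Lemma ucoordP (X : fcar E) k : uclose (fun i => urep X i k) (fun=> ucoord X k).
Proof. have [M hM] := bounded_coord k (bounded_urep X); exact: uclimP hM. Qed.

Lemma ucoord_uclsE x l : bounded x ->
  (forall k, uclose (fun i => x i k) (fun=> l k)) -> ucoord (ucls x) = l.
Proof.
move=> bx h; apply: funext => k; symmetry; apply: (uclose_const_unique HU (h k)).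
apply: (uclose_trans HU _ (ucoordP _ k)).
by have /urel_coordwise := urel_urep_ucls bx; apply.
Qed.

Lemma ucoord0 : ucoord (fzero E) = fzero CN.
Proof. by apply: ucoord_uclsE => [|k]; [exact: bounded_const | exact: uclose_refl]. Qed.

Lemma ucoordD X Y : ucoord (fadd X Y) = fadd (f := CN) (ucoord X) (ucoord Y).
Proof.
apply: ucoord_uclsE; first by apply: boundedD; apply: bounded_urep.
by move=> k; exact: (ucloseD HU) (ucoordP X k) (ucoordP Y k).
Qed.

Lemma ucoordN X : ucoord (fopp X) = fopp (f := CN) (ucoord X).
Proof.
apply: ucoord_uclsE; first by apply: boundedN; apply: bounded_urep.
by move=> k; exact: (ucloseN HU) (ucoordP X k).
Qed.

Lemma ucoordZ c X : ucoord (fscale c X) = fscale (f := CN) c (ucoord X).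
Proof.
apply: ucoord_uclsE; first by apply: boundedZ; apply: bounded_urep.
by move=> k; exact: (ucloseZ HU) (ucoordP X k).
Qed.

Lemma ucoordM X Y : ucoord (fmul X Y) = fmul (f := CN) (ucoord X) (ucoord Y).
Proof.
apply: ucoord_uclsE; first by apply: boundedM; apply: bounded_urep.
move=> k; have [M hM] := bounded_coord k (bounded_urep X).
exact: (ucloseM HU) (ucoordP X k) (ucoordP Y k) hM.
Qed.

Lemma fsn_ucoord n X : fsn CN n (ucoord X) = fsn E n X.
Proof.
symmetry; apply: (ulimitE HU) => e e0.
have := ultra_bigI HU (A := fun k => [set i | normc (urep X i k - ucoord X k) < e]) (n := n)
  (fun k _ => ucoordP X k e0).
move=> hU; apply: (ultraS HU hU) => i /= hi.
apply: le_lt_trans (cnorm_lipschitz _ _ _) _; exact: cnorm_lt.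
Qed.

Lemma uconstK : cancel uconst ucoord.
Proof. by move=> y; apply: ucoord_uclsE => [|k]; [exact: bounded_const | exact: uclose_refl]. Qed.

Lemma ucoordK : cancel ucoord uconst.
Proof.
move=> X; apply: eq_sig_hprop => [? ? ?|]; first exact: Prop_irrelevance.
rewrite /= unormal_id; last exact: bounded_const.
rewrite (urepP X).2; apply: funext => y; apply: propext.
split=> -[hb hr]; split=> //; apply/urel_coordwise => k.
  by apply: (uclose_trans HU (ucoordP X k)); move/urel_coordwise: hr; apply.
by apply: (uclose_trans HU (uclose_sym HU (ucoordP X k))); move/urel_coordwise: hr; apply.
Qed.

Lemma ultrapower_CN_isometric : @isometric_iso R E CN ucoord uconst.
Proof.
split; [exact: ucoordK | exact: uconstK | exact: ucoord0 | exact: ucoordD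
       | exact: ucoordN | exact: ucoordM | exact: ucoordZ | exact: fsn_ucoord].
Qed.

End UltrapowerOfSequences.

Theorem mainTheorem14 (R : realType) (I : Type) (U : set (set I)) :
  ultrafilter U ->
  countably_incomplete U ->
  aleph_plus_good U (CN R) ->
  falg_iso (ultrapower U (CN R)) (CN R) /\
  approx_prop (ultrapower U (CN R)) /\
  contractible (ultrapower U (CN R)).
Proof.
move=> HU _ _; have iso := ultrapower_CN_isometric R HU.
split; first exact: falg_iso_of_isometric iso.
split; first exact: approx_prop_isometric iso (@CN_approx_prop R).
exact: contractible_isometric iso (@CN_contractible R).
Qed.
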